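(* Let $G=(V,E)$ be a graph of goods and let $n\ge 1$ agents be given with utility functions on $G$. If all agents except at most one are of the same type, then an mms-allocation of the goods of $G$ to the $n$ agents exists.
   Context: A graph of goods is a finite connected graph $G=(V,E)$ whose vertices are goods. A utility function on $G$ assigns a non-negative real number to each good and is extended additively to sets: $u(X)=\sum_{v\in X}u(v)$. A $G$-bundle is a subset of $V$ that induces a connected subgraph of $G$ (the empty set is also allowed as a bundle). An $n$-split of $G$ is a sequence $P_1,\dots,P_n$ of pairwise disjoint $G$-bundles (possibly empty) whose union is $V$. The maximin share is $\mathrm{mms}^{(n)}(G,u)=\max_{P_1,\dots,P_n}\min_{i} u(P_i)$, the maximum taken over all $n$-splits of $G$. Given agents $1,\dots,n$ with utility functions $u_1,\dots,u_n$, an allocation is an $n$-split $P_1,\dots,P_n$ where $P_i$ is given to agent $i$; it is an mms-allocation if $u_i(P_i)\ge \mathrm{mms}^{(n)}(G,u_i)$ for all $i$ ($n$ being the number of agents). Two agents are of the same type if they have the same utility function. *)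

From HB Require Import structures.
From mathcomp Require Import all_boot all_order all_algebra.
Set Implicit Arguments. Unset Strict Implicit. Unset Printing Implicit Defensive.
Import Order.TTheory GRing.Theory Num.Theory.
Local Open Scope ring_scope.

Definition graph_of_goods (V : finType) (e : rel V) : Prop :=
  symmetric e /\ (#|V| > 0)%N /\ (forall x y : V, connect e x y).

Definition induced (V : finType) (e : rel V) (X : {set V}) : rel V :=
  [rel x y | [&& x \in X, y \in X & e x y]].

(* A G-bundle: X induces a connected subgraph (the empty set is allowed). *)
Definition bundle (V : finType) (e : rel V) (X : {set V}) : bool :=
  [forall x in X, forall y in X, connect (induced e X) x y].

Definition util (R : realFieldType) (V : finType) (u : V -> R) (X : {set V}) : R :=
  \sum_(v in X) u v.

Definition is_split (V : finType) (e : rel V) (n : nat) (P : 'I_n -> {set V}) : bool :=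
  [&& [forall i, bundle e (P i)],
      [forall i, forall j, (i != j) ==> [disjoint P i & P j]] &
      (\bigcup_(i < n) P i == [set: V])].

(* Minimum utility of the parts of P; the neutral element u(V) is an upper
   bound of all u(P i), so for n >= 1 this is exactly min_i u(P i). *)
Definition min_part (R : realFieldType) (V : finType) (u : V -> R) (n : nat)
    (P : 'I_n -> {set V}) : R :=
  \big[Num.min/util u [set: V]]_(i < n) util u (P i).

(* Maximin share: max over all n-splits of min_i u(P i).  The neutral
   element 0 is below every value (utilities are non-negative) and splits exist. *)
Definition mms (R : realFieldType) (V : finType) (e : rel V) (n : nat) (u : V -> R) : R :=
  \big[Num.max/0]_(P : {ffun 'I_n -> {set V}} | is_split e P) min_part u P.

Definition mms_allocation (R : realFieldType) (V : finType) (e : rel V) (n : nat)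
    (u : 'I_n -> V -> R) (P : 'I_n -> {set V}) : Prop :=
  is_split e P /\ forall i, util (u i) (P i) >= mms e n (u i).

(* Take a split P maximising min_i u0(P i) over all splits, for the common
   utility u0, so every part is worth at least mms(u0) to the agents of the
   common type.  The odd agent j takes a part it values most; by averaging, that
   part is worth at least u_j(V)/n >= mms(u_j).  Exchanging the parts of j and of
   its chosen index gives an mms-allocation. *)
From HB Require Import structures.
From mathcomp Require Import all_boot all_order all_algebra.
From mathcomp Require Import fingroup perm.
Import Order.TTheory GRing.Theory Num.Theory.
Local Open Scope ring_scope.

Section Splits.

Set Implicit Arguments.
Unset Strict Implicit.

Variables (R : realFieldType) (V : finType) (e : rel V) (n : nat).

Lemma bundle_set0 : bundle e set0.
Proof. by apply/forallP => x; rewrite in_set0. Qed.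

Lemma bundle_setT : (forall x y : V, connect e x y) -> bundle e [set: V].
Proof.
move=> conn; apply/forall_inP => x _; apply/forall_inP => y _.
by rewrite (@eq_connect _ _ e) // => a b; rewrite /induced /= !in_setT.
Qed.

Lemma is_split_single (j : 'I_n) :
  (forall x y : V, connect e x y) ->
  is_split e [ffun i => if i == j then [set: V] else set0].
Proof.
move=> conn; apply/and3P; split.
- apply/forallP => i; rewrite ffunE.
  by case: (i == j); [exact: bundle_setT | exact: bundle_set0].
- apply/forallP => i; apply/forallP => i'; apply/implyP => ii'; rewrite !ffunE.
  case: (eqVneq i j) => [<- | _]; last by rewrite disjoints_subset sub0set.
  by rewrite eq_sym (negbTE ii') disjoints_subset setC0 subsetT.
- apply/eqP/setP => v; rewrite in_setT; apply/bigcupP; exists j => //.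
  by rewrite ffunE eqxx in_setT.
Qed.

Lemma is_split_perm (P : 'I_n -> {set V}) (s : {perm 'I_n}) :
  is_split e P -> is_split e (fun i => P (s i)).
Proof.
case/and3P => /forallP Pb /forallP Pd /eqP Pc; apply/and3P; split.
- by apply/forallP => i; apply: Pb.
- apply/forallP => i; apply/forallP => i'; apply/implyP => ii'.
  have /forallP/(_ (s i'))/implyP := Pd (s i); apply.
  by apply: contra ii' => /eqP/perm_inj ->.
- apply/eqP/setP => v; rewrite in_setT.
  have /bigcupP[i _ Pv] : v \in \bigcup_i P i by rewrite Pc in_setT.
  by apply/bigcupP; exists (s^-1 i)%g; rewrite ?permKV.
Qed.

Lemma util_split (u : V -> R) (P : 'I_n -> {set V}) :
  is_split e P -> \sum_i util u (P i) = util u [set: V].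
Proof.
case/and3P => _ /forallP Pd /eqP Pc.
rewrite /util -Pc partition_disjoint_bigcup // => i j ij.
by have /forallP/(_ j)/implyP := Pd i; apply.
Qed.

Lemma util_split_le_mulrn (u : V -> R) (P : 'I_n -> {set V}) (x : R) :
  is_split e P -> (forall i, util u (P i) <= x) -> util u [set: V] <= x *+ n.
Proof.
move=> splitP Px; rewrite -(util_split u splitP) -[n in x *+ n]card_ord -sumr_const.
by apply: ler_sum => i _.
Qed.

Lemma mulrn_le_util_split (u : V -> R) (P : 'I_n -> {set V}) (x : R) :
  is_split e P -> (forall i, x <= util u (P i)) -> x *+ n <= util u [set: V].
Proof.
move=> splitP Px; rewrite -(util_split u splitP) -[n in x *+ n]card_ord -sumr_const.
by apply: ler_sum => i _.
Qed.

Lemma mms_mulrn_le_util (u : V -> R) :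
  (0 < n)%N -> (forall v, 0 <= u v) -> mms e n u *+ n <= util u [set: V].
Proof.
move=> n_gt0 u_ge0.
have nR : 0 < (n%:R : R) by rewrite ltr0n.
rewrite -mulr_natr -ler_pdivlMr //; apply/bigmax_leP; split.
  by rewrite divr_ge0 ?ler0n //; apply: sumr_ge0 => v _.
move=> P splitP; rewrite ler_pdivlMr // mulr_natr.
by apply: (mulrn_le_util_split splitP) => i; exact: bigmin_le.
Qed.

Lemma exists_split_ge_mms (u : V -> R) (P0 : {ffun 'I_n -> {set V}}) :
  (forall v, 0 <= u v) -> is_split e P0 ->
  exists2 P : 'I_n -> {set V}, is_split e P & forall i, mms e n u <= util u (P i).
Proof.
move=> u_ge0 splitP0.
have [P splitP Pmax] :=
  @arg_maxP _ _ _ P0 (fun P => is_split e P) (fun P => min_part u P) splitP0.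
exists P => // i; apply/bigmax_leP; split => [|Q splitQ].
  by apply: sumr_ge0 => v _.
by apply: le_trans (Pmax Q splitQ) _; exact: bigmin_le.
Qed.

Lemma exists_part_ge_mms (u : V -> R) (P : 'I_n -> {set V}) :
  (0 < n)%N -> (forall v, 0 <= u v) -> is_split e P ->
  exists k, mms e n u <= util u (P k).
Proof.
move=> n_gt0 u_ge0 splitP.
have [k _ Pk_max] := @arg_maxP _ _ _ (Ordinal n_gt0) predT (util u \o P) isT.
exists k; suff : mms e n u *+ n <= util u (P k) *+ n.
  by rewrite lerMn2r eqn0Ngt n_gt0.
apply: le_trans (mms_mulrn_le_util n_gt0 u_ge0) _.
by apply: (util_split_le_mulrn splitP) => i; exact: Pk_max.
Qed.

End Splits.

Theorem proposition2p1 (R : realFieldType) (V : finType) (e : rel V) (n : nat)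
  (u : 'I_n -> V -> R) :
  graph_of_goods e ->
  (0 < n)%N ->
  (forall i v, 0 <= u i v) ->
  (exists (j : 'I_n) (u0 : V -> R), forall i, i != j -> u i = u0) ->
  exists P : 'I_n -> {set V}, mms_allocation e u P.
Proof.
move=> [_ [_ conn]] n_gt0 u_ge0 [j [u0 u_common]].
(* When n = 1 the witness u0 is arbitrary and may be negative. *)
have [uc uc_ge0 u_uc] : exists2 uc : V -> R,
    (forall v, 0 <= uc v) & forall i, i != j -> u i = uc.
  case: (pickP (predC1 j)) => [i0 /= i0j | only_j]; last first.
    by exists (u j) => // i ij; have := only_j i; rewrite /= ij.
  by exists (u i0) => // i ij; rewrite u_common // u_common.
have [P splitP P_ge_mms] := exists_split_ge_mms uc_ge0 (is_split_single j conn).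
have [k Pk_ge_mms] := exists_part_ge_mms n_gt0 (u_ge0 j) splitP.
exists (fun i => P (tperm j k i)); split; first exact: is_split_perm.
move=> i; have [-> | ij] := eqVneq i j; first by rewrite tpermL.
by rewrite u_uc //; exact: P_ge_mms.
Qed.
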